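(* Let $n\ge1$, $k\ge1$, $A\in\{1,\dots,n\}^k$ and $B\subset\{1,\dots,n\}$ with $|B|=k+1$. Let $\tilde A=c^{1-\rho(A,B)}A$, $\tilde B=c^{1-\rho(A,B)}B$, let $I=(i_1\le\dots\le i_k)$ be the non-decreasing rearrangement of $\tilde A$, and $(j_1,\dots,j_k)=\Pi(I,\tilde B)$. Then $i_l<j_l$ for all $l\in\{1,\dots,k\}$.
   Context: Let $c=(1\,2\,\dots\,n)$ be the cyclic shift $x\mapsto x+1$ for $x<n$, $n\mapsto1$; it acts on sequences componentwise and on sets elementwise, and powers $c^m$ are taken with $m\in\mathbb Z$ (modulo $n$). Parking process: given $E=(e_1,\dots,e_k)\in\{1,\dots,n\}^k$ and $O\subset\{1,\dots,n\}$ with $|O|=k+1$, define $(p_1,\dots,p_k)$ by backward induction: $p_k=c^{r}(e_k)$ where $r=\min\{s\in\{1,\dots,n\}: c^s(e_k)\in O\}$, and, once $p_k,\dots,p_{l+1}$ are defined, $p_l=c^{r}(e_l)$ where $r=\min\{s\in\{1,\dots,n\}: c^s(e_l)\in O\setminus\{p_{l+1},\dots,p_k\}\}$. Write $\Pi(E,O)=(p_1,\dots,p_k)$; the unique element of $O\setminus\{p_1,\dots,p_k\}$ is the residue $\rho(E,O)$. *)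

(* Points of {1,...,n} are natural numbers x with 1 <= x <= n. *)
From mathcomp Require Import all_boot all_order all_algebra.
Set Implicit Arguments. Unset Strict Implicit. Unset Printing Implicit Defensive.

Definition cyc (n x : nat) : nat := if x < n then x.+1 else 1.

Definition cpow (n : nat) (m : int) (x : nat) : nat :=
  iter `|(m %% (n%:Z))%Z|%N (cyc n) x.

(* componentwise / elementwise action on sequences and (sets given as) sequences *)
Definition cpow_seq (n : nat) (m : int) (s : seq nat) : seq nat :=
  map (cpow n m) s.

(* c^r(e) where r = min { s in {1..n} : c^s(e) \in R } *)
Definition hit (n : nat) (R : seq nat) (e : nat) : nat :=
  let i := find (fun s => iter s (cyc n) e \in R) (iota 1 n) in
  iter i.+1 (cyc n) e.

(* backward induction: the head is p_l, computed from O minus the already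
   parked p_{l+1},...,p_k (given by the tail) *)
Fixpoint park (n : nat) (O : seq nat) (E : seq nat) : seq nat :=
  match E with
  | [::] => [::]
  | e :: E' => let P := park n O E' in
               hit n [seq x <- O | x \notin P] e :: P
  end.

Definition Pi (n : nat) (E O : seq nat) : seq nat := park n O E.

(* rho(E, O): the (unique) element of O \ {p_1,...,p_k} *)
Definition rho (n : nat) (E O : seq nat) : nat :=
  head 0 [seq x <- O | x \notin Pi n E O].

Definition in_range (n x : nat) : bool := (1 <= x <= n).

From mathcomp Require Import all_boot all_order all_algebra zify.

Set Implicit Arguments.
Unset Strict Implicit.
Unset Printing Implicit Defensive.

(* Write [free_spots O E] for the spots of O left empty after the cars of E
   have parked (the last car first, as in [park]).  The proof rests on two
   facts, established after basic arithmetic of the shift c and a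
   characterisation of [hit] as the first free spot met by a car.
   (1) [free_spots O E] is a fold of the one-car operation [park_step]
       ("remove the spot taken by car e"), and two such operations commute:
       if two cars aim at the same spot p, whichever parks second moves on to
       the first free spot after p.  Hence [free_spots O E] depends only on the
       multiset of cars E ([free_spots_perm]).
   (2) Parking commutes with the rotations c^j of the cycle ([free_spots_rot]).
   With m = 1 - rho(A,B), c^m sends the residue rho(A,B) to 1, so by (2) spot
   1 stays free when c^m A parks in c^m B, and by (1) it still stays free when
   the cars arrive in the sorted order I.  Finally, when spot 1 stays free no
   car ever drives past n (it would then stop at 1), so every car parks
   strictly after its preferred spot ([park_above]): i_l < j_l. *)

Section CyclicShift.
Variable n : nat.

Lemma cyc_range x : in_range n x -> in_range n (cyc n x).
Proof. by rewrite /in_range /cyc; case: ifP => /=; lia. Qed.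

Lemma iter_cyc_range s x : in_range n x -> in_range n (iter s (cyc n) x).
Proof. by move=> Hx; elim: s => [|s IH] //=; apply: cyc_range. Qed.

Lemma cyc_inj x y : in_range n x -> in_range n y -> cyc n x = cyc n y -> x = y.
Proof. by rewrite /in_range /cyc => /andP[? ?] /andP[? ?]; do 2 case: ifP; lia. Qed.

Lemma iter_cyc_inj j x y : in_range n x -> in_range n y ->
  iter j (cyc n) x = iter j (cyc n) y -> x = y.
Proof.
move=> Hx Hy; elim: j => [//|j IH] /= /cyc_inj Heq.
by apply/IH/Heq; apply: iter_cyc_range.
Qed.

Lemma iter_cyc_small s e : e + s <= n -> iter s (cyc n) e = e + s.
Proof.
elim: s => [|s IH] Hs /=; first by rewrite addn0.
by rewrite IH /cyc ?ifT; lia.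
Qed.

Lemma iter_cyc_to_one e : in_range n e -> iter (n.+1 - e) (cyc n) e = 1.
Proof.
rewrite /in_range => /andP [e_ge1 e_len].
have -> : n.+1 - e = (n - e).+1 by lia.
by rewrite iterS iter_cyc_small ?subnKC // /cyc ltnn.
Qed.

Lemma iter_cyc_reach e x : in_range n e -> in_range n x ->
  exists2 s, 0 < s <= n & iter s (cyc n) e = x.
Proof.
move=> He Hx; move: (He) (Hx); rewrite /in_range => /andP [? ?] /andP [? ?].
case: (ltnP e x) => ex.
  by exists (x - e); rewrite ?iter_cyc_small; lia.
exists ((x - 1) + (n.+1 - e)); first lia.
rewrite iterD iter_cyc_to_one // iter_cyc_small; lia.
Qed.

End CyclicShift.

Section FirstHit.
Variable n : nat.

Lemma all_in_range_filter (p : pred nat) R :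
  all (in_range n) R -> all (in_range n) (filter p R).
Proof. by move=> HR; rewrite all_filter; apply: sub_all HR => x /= ->; rewrite implybT. Qed.

Definition first_hit (R : seq nat) (e s : nat) : Prop :=
  [/\ 0 < s <= n, iter s (cyc n) e \in R
    & forall t, 0 < t < s -> iter t (cyc n) e \notin R].

Lemma first_hit_uniq R e s s' : first_hit R e s -> first_hit R e s' -> s = s'.
Proof.
case=> Hs Hin Hbefore [Hs' Hin' Hbefore'].
case: (ltngtP s s') => // [lt_ss' | lt_s's].
- by move: (Hbefore' s); rewrite Hin => /(_ _)/negP; lia.
- by move: (Hbefore s'); rewrite Hin' => /(_ _)/negP; lia.
Qed.

Lemma hitP R e : in_range n e -> all (in_range n) R -> R != [::] ->
  exists2 s, first_hit R e s & hit n R e = iter s (cyc n) e.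
Proof.
move=> He HR; case: R HR => [//|x R'] HR _.
have [s0 Hs0 Ex] := iter_cyc_reach He (allP HR x (mem_head _ _)).
set a := fun s => iter s (cyc n) e \in x :: R'.
have Ha : has a (iota 1 n).
  by apply/hasP; exists s0; rewrite ?mem_iota /a ?Ex ?mem_head; first lia.
have lt_find : find a (iota 1 n) < n by move: Ha; rewrite has_find size_iota.
exists (find a (iota 1 n)).+1 => //; split; first lia.
- by have := nth_find 0 Ha; rewrite nth_iota // add1n.
- move=> t Ht; have := @before_find _ 0 a (iota 1 n) t.-1.
  rewrite nth_iota; last lia.
  have -> : 1 + t.-1 = t by lia.
  by move=> Hnot; apply/negbT/Hnot; lia.
Qed.

Lemma hit_first R e s : in_range n e -> all (in_range n) R ->
  first_hit R e s -> hit n R e = iter s (cyc n) e.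
Proof.
move=> He HR Hs; have [_ Hin _] := Hs.
have nonempty : R != [::] by apply: contraTneq Hin => ->.
have [s' Hs' ->] := hitP He HR nonempty.
by rewrite (first_hit_uniq Hs Hs').
Qed.

End FirstHit.

Section ParkStep.
Variable n : nat.

Definition park_step (R : seq nat) (e : nat) : seq nat :=
  [seq x <- R | x != hit n R e].

(* If the car preferring a takes spot p, a later car preferring a behaves
   exactly like one preferring p: all spots between a and p are taken. *)
Lemma hit_after_taken R a s : in_range n a -> all (in_range n) R ->
  first_hit n R a s ->
  let p := iter s (cyc n) a in
  let R' := [seq x <- R | x != p] in
  R' != [::] -> hit n R' a = hit n R' p.
Proof.
move=> Ha HR [Hs Hin Hbefore] p R' R'_nonempty.
have HR' : all (in_range n) R' by apply: all_in_range_filter.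
have [u [Hu Hinu Hbeforeu] ->] := hitP Ha HR' R'_nonempty.
have lt_su : s < u.
  move: Hinu; rewrite mem_filter => /andP [Hup HuR].
  case: (ltngtP s u) => // [lt_us | eq_su]; last by rewrite -eq_su eqxx in Hup.
  by move: (Hbefore u); rewrite HuR => /(_ _)/negP; lia.
have shift t : iter t (cyc n) p = iter (t + s) (cyc n) a by rewrite iterD.
have p_hit : first_hit n R' p (u - s).
  split; [lia | by rewrite shift subnK 1?ltnW |].
  by move=> t Ht; rewrite shift; apply: Hbeforeu; lia.
by rewrite (hit_first _ HR' p_hit) ?shift ?subnK 1?ltnW // iter_cyc_range.
Qed.

Lemma park_step_comm R a b : in_range n a -> in_range n b -> all (in_range n) R ->
  park_step (park_step R a) b = park_step (park_step R b) a.
Proof.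
move=> Ha Hb HR.
have [->|R_nonempty] := eqVneq R [::]; first by [].
have [sa Hsa Ea] := hitP Ha HR R_nonempty.
have [sb Hsb Eb] := hitP Hb HR R_nonempty.
rewrite /park_step Ea Eb.
set p := iter sa (cyc n) a; set q := iter sb (cyc n) b.
rewrite -!filter_predI; apply: eq_in_filter => x xR /=.
have [eq_pq | ne_pq] := eqVneq p q.
  (* both cars aim at the same spot: the second one moves on from there *)
  rewrite -eq_pq; set R' := [seq x <- R | x != p].
  have [R'_empty | R'_nonempty] := eqVneq R' [::].
    have : x \notin R' by rewrite R'_empty.
    by rewrite mem_filter xR andbT negbK => /eqP ->; rewrite eqxx !andbF.
  have same_next : hit n R' a = hit n R' b.
    rewrite (hit_after_taken Ha HR Hsa R'_nonempty) /R' -/p eq_pq.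
    by rewrite (hit_after_taken Hb HR Hsb) -/q // -eq_pq.
  by rewrite same_next.
(* distinct spots: removing one does not change where the other car goes *)
have hit_other c s r : in_range n c -> first_hit n R c s ->
  iter s (cyc n) c != r ->
  hit n [seq x <- R | x != r] c = iter s (cyc n) c.
  move=> Hc [Hs Inc Bc] Hne; apply: hit_first => //; first exact: all_in_range_filter.
  split=> //; first by rewrite mem_filter Hne.
  by move=> t Ht; rewrite mem_filter negb_and Bc ?orbT.
by rewrite (hit_other b sb p) 1?eq_sym // (hit_other a sa q) // andbC.
Qed.

End ParkStep.

Section FreeSpots.
Variable n : nat.

Definition free_spots (O E : seq nat) : seq nat :=
  foldr (fun e R => park_step n R e) O E.

Lemma free_spotsE O E : [seq x <- O | x \notin park n O E] = free_spots O E.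
Proof.
elim: E => [|e E IH] /=; first by rewrite (eq_filter (a2 := predT)) ?filter_predT.
rewrite -IH /park_step -filter_predI; apply: eq_filter => x /=.
by rewrite in_cons negb_or.
Qed.

Lemma free_spots_in_range O E :
  all (in_range n) O -> all (in_range n) (free_spots O E).
Proof. by move=> HO; elim: E => [|e E IH] //=; apply: all_in_range_filter. Qed.

Lemma free_spots_uniq O E : uniq O -> uniq (free_spots O E).
Proof. by move=> UO; elim: E => [|e E IH] //=; apply: filter_uniq. Qed.

(* Each car occupies at most one spot. *)
Lemma size_free_spots O E : uniq O -> size O <= size (free_spots O E) + size E.
Proof.
move=> UO; elim: E => [|e E IH] /=; first by rewrite addn0.
rewrite addnS -addSn (leq_trans IH) // leq_add2r /park_step.
rewrite -(count_predC (fun x => x != hit n (free_spots O E) e)) size_filter.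
rewrite -addn1 leq_add2l.
rewrite (eq_count (a2 := pred1 (hit n (free_spots O E) e))) => [|x /=]; last by rewrite negbK.
by rewrite count_uniq_mem ?leq_b1 // free_spots_uniq.
Qed.

Lemma free_spots_perm O E E' : all (in_range n) O -> all (in_range n) E ->
  perm_eq E E' -> free_spots O E = free_spots O E'.
Proof.
move=> HO; elim: E E' => [|x E IH] E' HE P.
  by case: E' P => // y s /perm_size.
have xE' : x \in E' by rewrite -(perm_mem P) mem_head.
case/splitPr: xE' P => t1 t2 P.
have P2 : perm_eq (t1 ++ x :: t2) (x :: t1 ++ t2) by rewrite -cat1s perm_catCA.
have P3 : perm_eq E (t1 ++ t2) by rewrite -(perm_cons x) (perm_trans P P2).
have Ht : all (in_range n) (x :: t1 ++ t2) by rewrite -(perm_all _ P2) -(perm_all _ P).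
move: HE Ht => /= /andP [Hx HE] /andP [_].
rewrite (IH _ HE P3) {IH P P2 P3 HE}.
(* move car x from the front to its position in t1 ++ x :: t2 *)
elim: t1 => [|y t1 IH] //= /andP [Hy Ht].
by rewrite -IH // park_step_comm // free_spots_in_range.
Qed.

(* If spot 1 stays free, every car parks strictly after its preferred spot,
   since a car that wrapped around past n would have stopped at 1. *)
Lemma park_above O E : all (in_range n) O -> all (in_range n) E ->
  1 \in free_spots O E ->
  forall l, l < size E -> nth 0 E l < nth 0 (park n O E) l.
Proof.
move=> HO; elim: E => [//|e E IH] /= /andP [He HE].
rewrite mem_filter => /andP [one_not_hit one_free] [|l] Hl /=; last exact: IH.
rewrite free_spotsE.
have nonempty : free_spots O E != [::] by apply: contraTneq one_free => ->.
have [s [Hs Hin Hbefore] Eh] := hitP He (free_spots_in_range E HO) nonempty.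
rewrite Eh in one_not_hit *.
have lt_s : s < n.+1 - e.
  have to_one := iter_cyc_to_one He.
  case: (ltngtP s (n.+1 - e)) => // [gt_s | eq_s].
  - by move: (Hbefore (n.+1 - e)); rewrite to_one one_free; move: He; rewrite /in_range; lia.
  - by rewrite eq_s to_one eqxx in one_not_hit.
by rewrite iter_cyc_small; move: He; rewrite /in_range; lia.
Qed.

End FreeSpots.

Section Rotation.
Variables n j : nat.
Let rot := iter j (cyc n).

Lemma iter_rot s x : iter s (cyc n) (rot x) = rot (iter s (cyc n) x).
Proof. by rewrite /rot -!iterD addnC. Qed.

Lemma mem_map_rot R y : all (in_range n) R -> in_range n y ->
  (rot y \in map rot R) = (y \in R).
Proof.
move=> HR Hy; apply/mapP/idP => [[z zR Eyz]|yR]; last by exists y.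
by rewrite (iter_cyc_inj Hy (allP HR z zR) Eyz).
Qed.

Lemma all_in_range_rot R : all (in_range n) R -> all (in_range n) (map rot R).
Proof. by move=> HR; rewrite all_map; apply: sub_all HR => x; apply: iter_cyc_range. Qed.

Lemma hit_rot R e : all (in_range n) R -> in_range n e ->
  hit n (map rot R) (rot e) = rot (hit n R e).
Proof.
move=> HR He; rewrite /hit (eq_find (a2 := fun s => iter s (cyc n) e \in R)) ?iter_rot //.
by move=> s; rewrite /= iter_rot mem_map_rot // iter_cyc_range.
Qed.

Lemma park_step_rot R e : all (in_range n) R -> in_range n e ->
  park_step n (map rot R) (rot e) = map rot (park_step n R e).
Proof.
move=> HR He; rewrite /park_step hit_rot // filter_map; congr map.
have [->|nonempty] := eqVneq R [::]; first by [].
have [s _ ->] := hitP He HR nonempty.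
apply: eq_in_filter => x xR /=.
congr negb; apply/eqP/eqP => [|-> //].
by apply: iter_cyc_inj; [exact: allP HR x xR | exact: iter_cyc_range].
Qed.

Lemma free_spots_rot O E : all (in_range n) O -> all (in_range n) E ->
  free_spots n (map rot O) (map rot E) = map rot (free_spots n O E).
Proof.
move=> HO; elim: E => [//|e E IH] /= /andP [He HE].
by rewrite IH // park_step_rot // free_spots_in_range.
Qed.

End Rotation.

Lemma cpow_to_one n r : in_range n r -> cpow n (1 - r%:Z)%R r = 1.
Proof.
move=> Hr; have /andP [r_ge1 r_len] := Hr; rewrite /cpow.
have -> : `|((1 - r%:Z)%R %% n%:Z)%Z|%N = (n.+1 - r) %% n.
  have -> : (1 - r%:Z = (-1) * n%:Z + (n.+1 - r)%N%:Z)%R by lia.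
  by rewrite modzMDl modz_nat absz_nat.
have [->|r_gt1] := eqVneq r 1; first by rewrite subSS subn0 modnn.
by rewrite modn_small ?iter_cyc_to_one //; lia.
Qed.

Theorem lemma5p2 (n k : nat) (A B : seq nat) :
  1 <= n -> 1 <= k ->
  size A = k -> all (in_range n) A ->
  uniq B -> size B = k.+1 -> all (in_range n) B ->
  let m : int := (1 - (rho n A B)%:Z)%R in
  let At := cpow_seq n m A in
  let Bt := cpow_seq n m B in
  let I := sort leq At in
  let J := Pi n I Bt in
  forall l, l < k -> nth 0 I l < nth 0 J l.
Proof.
move=> _ _ sA rA uB sB rB m At Bt I J l lt_lk.
set r := rho n A B in m At Bt I J *.
(* the residue is a free spot, since k cars leave one of k + 1 spots free *)
have r_free : r \in free_spots n B A.
  have := size_free_spots n A uB; rewrite /r /rho /Pi free_spotsE.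
  by case: (free_spots n B A) => [|x F] /=; rewrite ?mem_head //; lia.
have r_range : in_range n r by apply: (allP (free_spots_in_range A rB)).
have rAt : all (in_range n) At by apply: all_in_range_rot.
have rBt : all (in_range n) Bt by apply: all_in_range_rot.
have At_I : perm_eq At I by rewrite perm_sym perm_sort.
have one_free : 1 \in free_spots n Bt I.
  rewrite -(free_spots_perm rBt rAt At_I) free_spots_rot // -(cpow_to_one r_range).
  exact: map_f.
apply: park_above => //; first by rewrite -(perm_all _ At_I).
by rewrite size_sort size_map sA.
Qed.
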